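(* Let $R \subseteq S$ be an extension of commutative rings such that $S$ is generated as an $R$-module by $1, f_1, \ldots, f_n$ ($n>0$, $f_i\in S$), and suppose $S$ has an exact presentation $R^{\oplus q} \xrightarrow{\mathbb M} R^{\oplus(n+1)} \xrightarrow{\varepsilon} S \to 0$ with $q>0$ and $\varepsilon = [1\ f_1\ \cdots\ f_n]$. If $f_if_j \in R$ for all $1 \le i,j\le n$, then $R$ is strictly closed in $S$.
   Context: For an extension of commutative rings $R \subseteq S$, the strict closure of $R$ in $S$ is $R^* = \{\alpha \in S \mid \alpha\otimes 1 = 1\otimes \alpha \text{ in } S\otimes_R S\}$; $R$ is strictly closed in $S$ if $R=R^*$. *)

From HB Require Import structures.
From mathcomp Require Import all_boot all_order all_algebra.
Set Implicit Arguments. Unset Strict Implicit. Unset Printing Implicit Defensive.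
Import Order.TTheory GRing.Theory Num.Theory.
Local Open Scope ring_scope.

(* The tensor product S (x)_R S is built in the standard
   way as the free abelian group on S * S modulo the subgroup generated by
   the bilinearity and R-balancedness relations. *)

Section Tensor.
Variable S : comPzRingType.
Variable R : {pred S}.

(* formal Z-linear combinations of symbols s (x) t *)
Definition fsum := seq (int * (S * S)).

Definition fcoef (l : fsum) (p : S * S) : int :=
  \sum_(e <- l | e.2 == p) e.1.

Definition rel_addl (s s' t : S) : fsum :=
  [:: (1, (s + s', t)); (-1, (s, t)); (-1, (s', t))].
Definition rel_addr (s t t' : S) : fsum :=
  [:: (1, (s, t + t')); (-1, (s, t)); (-1, (s, t'))].
Definition rel_bal (r s t : S) : fsum :=
  [:: (1, (r * s, t)); (-1, (s, r * t))].

Definition is_tensor_rel (g : fsum) : Prop :=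
  (exists s s' t, g = rel_addl s s' t) \/
  (exists s t t', g = rel_addr s t t') \/
  (exists r s t, r \in R /\ g = rel_bal r s t).

(* a formal sum maps to 0 in S (x)_R S: it is (as an element of the free
   abelian group) an integer combination of generating relations *)
Definition tensor_zero (l : fsum) : Prop :=
  exists gs : seq (int * fsum),
    (forall g, g \in gs -> is_tensor_rel g.2) /\
    forall p, fcoef l p = \sum_(g <- gs) g.1 * fcoef g.2 p.

Definition tensor_eq (a b c d : S) : Prop :=
  tensor_zero [:: (1, (a, b)); (-1, (c, d))].

Definition strict_closure : S -> Prop := fun alpha => tensor_eq alpha 1 1 alpha.
Definition strictly_closed : Prop := forall alpha : S, alpha \in R <-> strict_closure alpha.

End Tensor.

(* the vector [1 f_1 ... f_n] as a function on 'I_n.+1 (index 0 |-> 1) *)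
Definition eps_vec (S : comPzRingType) (n : nat) (f : 'I_n -> S) (i : 'I_n.+1) : S :=
  oapp f 1 (unlift ord0 i).

From HB Require Import structures.
From mathcomp Require Import all_boot all_order all_algebra.
From mathcomp Require Import ring.
From Stdlib Require Import ClassicalEpsilon.
Import GRing.Theory.
Local Open Scope ring_scope.
Set Implicit Arguments. Unset Strict Implicit.

(* Write every t : S as t = c + \sum_i a_i f_i with c, a_i in R
   and let cc t be a chosen "constant coefficient" c.  It is not well defined,
   but s * cc t is well defined modulo R for every s : if d_0 + \sum_i d_i f_i = 0
   with coefficients in R, then writing s = u_0 + \sum_k u_k f_k gives
   s d_0 = u_0 d_0 - \sum_(k,i) u_k d_i (f_k f_i), which lies in R because
   every f_k f_i does.  Hence s (x) t |-> s * cc t is a well-defined additive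
   map S (x)_R S -> S/R.  It sends alpha (x) 1 to alpha and 1 (x) alpha to
   cc alpha, which lies in R; so alpha (x) 1 = 1 (x) alpha forces alpha in R.
   The inclusion R in R^* is the balancing relation r (x) 1 = 1 (x) r. *)

Section TensorEvaluation.
Variables (S : comPzRingType) (R : {pred S}).
Variables (V : zmodType) (A : zmodClosed V) (F : S * S -> V).

Definition fsum_eval (l : fsum S) : V := \sum_(e <- l) F e.2 *~ e.1.

Lemma fcoef_cons (e : int * (S * S)) (l : fsum S) (p : S * S) :
  fcoef (e :: l) p = (if e.2 == p then e.1 else 0) + fcoef l p.
Proof. by rewrite /fcoef big_cons; case: eqP => //; rewrite add0r. Qed.

(* fsum_eval only depends on the coefficient function of the formal sum;
   this is what makes it compatible with the quotient defining tensor_zero. *)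
Lemma fsum_eval_coef (P : seq (S * S)) (l : fsum S) :
  uniq P -> {subset [seq e.2 | e <- l] <= P} ->
  fsum_eval l = \sum_(p <- P) F p *~ fcoef l p.
Proof.
move=> uP; elim: l => [|e l IH] sub_lP.
  by rewrite /fsum_eval big_nil big1 // => p _; rewrite /fcoef big_nil.
have eP : e.2 \in P by apply: sub_lP; rewrite inE eqxx.
rewrite /fsum_eval big_cons -/(fsum_eval l) IH; last first.
  by move=> x hx; apply: sub_lP; rewrite inE hx orbT.
under [RHS]eq_bigr => p _ do rewrite fcoef_cons mulrzDr.
rewrite big_split /=; congr (_ + _).
rewrite (bigD1_seq e.2) //= eqxx big1 ?addr0 // => p /negbTE.
by rewrite eq_sym => ->.
Qed.

(* Universal property: if F sends every generating relation of S (x)_R S into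
   the additive subgroup A, it sends every formal sum vanishing in S (x)_R S
   into A, i.e. F induces an additive map S (x)_R S -> V / A. *)
Lemma fsum_eval_tensor_zero (l : fsum S) :
  (forall g, is_tensor_rel R g -> fsum_eval g \in A) ->
  tensor_zero R l -> fsum_eval l \in A.
Proof.
move=> F_rel [gs [gs_rel l_coef]].
set P := undup ([seq e.2 | e <- l] ++ flatten [seq [seq e.2 | e <- g.2] | g <- gs]).
have uP : uniq P := undup_uniq _.
have sub_gP g : g \in gs -> {subset [seq e.2 | e <- g.2] <= P}.
  move=> hg x hx; rewrite mem_undup mem_cat; apply/orP; right.
  by apply/flattenP; exists [seq e.2 | e <- g.2]; first by apply/mapP; exists g.
rewrite (@fsum_eval_coef P) //; last first.
  by move=> x hx; rewrite mem_undup mem_cat hx.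
have -> : \sum_(p <- P) F p *~ fcoef l p =
          \sum_(g <- gs) (\sum_(p <- P) F p *~ fcoef g.2 p) *~ g.1.
  under eq_bigr => p _ do rewrite l_coef mulrz_sumr.
  rewrite exchange_big /=; apply: eq_bigr => g _.
  by rewrite mulrz_suml; apply: eq_bigr => p _; rewrite -mulrzA mulrC.
rewrite big_seq rpred_sum // => g hg.
by rewrite rpredMz // -(fsum_eval_coef uP (sub_gP g hg)); apply/F_rel/gs_rel.
Qed.

End TensorEvaluation.

Lemma mem_strict_closure (S : comPzRingType) (R : {pred S}) (alpha : S) :
  alpha \in R -> strict_closure R alpha.
Proof.
move=> hR; exists [:: (1%Z, rel_bal alpha 1 1)]; split.
  by move=> g; rewrite inE => /eqP ->; right; right; exists alpha, 1, 1.
by move=> p; rewrite big_seq1 mul1r /fcoef !big_cons !big_nil /= !mulr1.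
Qed.

Section ConstantCoefficient.
Variables (S : comPzRingType) (R : {pred S}).
Hypothesis R_subring : subring_closed R.
HB.instance Definition _ := GRing.isSubringClosed.Build S R R_subring.

Variables (n : nat) (f : 'I_n -> S).
Hypothesis f_mul : forall i j, f i * f j \in R.

Definition coords (t c : S) (a : 'I_n -> S) : Prop :=
  [/\ c \in R, forall i, a i \in R & t = c + \sum_i a i * f i].

Hypothesis coords_ex : forall t, exists c a, coords t c a.

Lemma coords_one : coords 1 1 (fun=> 0).
Proof. by split; rewrite ?rpred1 ?rpred0 // big1 ?addr0 // => i; rewrite mul0r. Qed.

Lemma coordsD t t' c c' a a' : coords t c a -> coords t' c' a' ->
  coords (t + t') (c + c') (fun i => a i + a' i).
Proof.
move=> [hc ha ->] [hc' ha' ->]; split=> [|i|]; rewrite ?rpredD //.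
under [X in _ = _ + X]eq_bigr => i _ do rewrite mulrDl.
by rewrite big_split /= addrACA.
Qed.

Lemma coordsZ r t c a : r \in R -> coords t c a ->
  coords (r * t) (r * c) (fun i => r * a i).
Proof.
move=> hr [hc ha ->]; split=> [|i|]; rewrite ?rpredM //.
by rewrite mulrDr mulr_sumr; under eq_bigr => i _ do rewrite mulrA.
Qed.

Lemma relation_const_mul s d0 (d : 'I_n -> S) :
  coords 0 d0 d -> s * (- d0) \in R.
Proof.
move=> [hd0 hd /esym/eqP]; rewrite addrC addr_eq0 => /eqP def_d0.
have [u0 [u [hu0 hu ->]]] := coords_ex s.
rewrite mulrDl rpredD //; first by rewrite rpredM ?rpredN.
rewrite -def_d0 mulr_suml rpred_sum // => k _; rewrite mulr_sumr rpred_sum // => i _.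
rewrite (_ : u k * f k * (d i * f i) = u k * d i * (f k * f i)); last by ring.
by apply/rpredM/f_mul/rpredM.
Qed.

Definition cc (t : S) : S := proj1_sig (constructive_indefinite_description _ (coords_ex t)).

Lemma cc_coords t : exists a, coords t (cc t) a.
Proof. exact: proj2_sig (constructive_indefinite_description _ (coords_ex t)). Qed.

Lemma cc_in t : cc t \in R.
Proof. by have [a [hc _ _]] := cc_coords t. Qed.

Lemma cc_mod s t c a : coords t c a -> s * (cc t - c) \in R.
Proof.
move=> [hc ha def_t]; have [b [hcc hb def_t']] := cc_coords t.
rewrite -opprB; apply: (@relation_const_mul s _ (fun i => a i - b i)).
split=> [|i|]; rewrite ?rpredB //; apply: esym.
under eq_bigr => i _ do rewrite mulrBl.
by rewrite sumrB addrACA -def_t -opprD -def_t' subrr.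
Qed.

Definition cc_pair (e : S * S) : S := e.1 * cc e.2.

Lemma cc_pair_rel g : is_tensor_rel R g -> fsum_eval cc_pair g \in R.
Proof.
case=> [[s [s' [t ->]]]|[[s [t [t' ->]]]|[r [s [t [hr ->]]]]]];
  rewrite /fsum_eval !big_cons big_nil /cc_pair /= !mulr1z !mulrN1z addr0.
- by rewrite (_ : _ + _ = 0) ?rpred0 //; ring.
- have [a ht] := cc_coords t; have [a' ht'] := cc_coords t'.
  rewrite (_ : _ + _ = s * (cc (t + t') - (cc t + cc t'))); last by ring.
  exact: cc_mod (coordsD ht ht').
- have [a ht] := cc_coords t.
  rewrite (_ : _ + _ = - (s * (cc (r * t) - r * cc t))); last by ring.
  by rewrite rpredN (cc_mod s (coordsZ hr ht)).
Qed.

(* Evaluating s (x) t |-> s * cc t on alpha (x) 1 - 1 (x) alpha. *)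
Lemma strict_closure_mem alpha : strict_closure R alpha -> alpha \in R.
Proof.
move=> /(fsum_eval_tensor_zero cc_pair_rel).
rewrite /fsum_eval !big_cons big_nil /cc_pair /= mulr1z mulrN1z addr0 mul1r.
move=> image_in_R; have cc1_mod := cc_mod alpha coords_one.
rewrite (_ : alpha = (alpha * cc 1 - cc alpha) - alpha * (cc 1 - 1) + cc alpha);
  last by ring.
by apply: rpredD; [apply: rpredB | apply: cc_in].
Qed.

End ConstantCoefficient.

Lemma eps_vec_comb (S : comPzRingType) (n : nat) (f : 'I_n -> S) (v : 'rV[S]_n.+1) :
  \sum_i v 0 i * eps_vec f i = v 0 ord0 + \sum_i v 0 (lift ord0 i) * f i.
Proof.
rewrite big_ord_recl /eps_vec /= unlift_none /= mulr1; congr (_ + _).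
by apply: eq_bigr => i _; rewrite liftK.
Qed.

Theorem corollary2p7 (S : comPzRingType) (R : {pred S}) (n q : nat)
    (f : 'I_n -> S) (M : 'M[S]_(q, n.+1)) :
  subring_closed R ->
  (0 < n)%N -> (0 < q)%N ->
  (* S is generated as an R-module by 1, f_1, ..., f_n (epsilon surjective) *)
  (forall s : S, exists v : 'rV[S]_n.+1,
      (forall i, v 0 i \in R) /\ s = \sum_i v 0 i * eps_vec f i) ->
  (* the matrix M has entries in R, i.e. is a map R^q -> R^(n+1) *)
  (forall i j, M i j \in R) ->
  (* exactness at R^(n+1): ker epsilon = im M *)
  (forall v : 'rV[S]_n.+1, (forall i, v 0 i \in R) ->
      (\sum_i v 0 i * eps_vec f i = 0 <->
       exists x : 'rV[S]_q, (forall j, x 0 j \in R) /\ v = x *m M)) ->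
  (forall i j, f i * f j \in R) ->
  strictly_closed R.
Proof.
move=> R_subring _ _ gen _ _ f_mul.
have coords_ex t : exists c a, coords R f t c a.
  have [v [hv ->]] := gen t.
  by exists (v 0 ord0), (fun i => v 0 (lift ord0 i)); rewrite eps_vec_comb.
move=> alpha; split; first exact: mem_strict_closure.
exact: strict_closure_mem f_mul coords_ex alpha.
Qed.
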